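(* Consider a downlink system with $M\ge 1$ single-antenna access points (APs) $\mathscr{A}=\{1,\dots,M\}$ and $N\ge 1$ single-antenna devices $\mathscr{D}=\{1,\dots,N\}$. Every AP–device link $(i,j)$ has instantaneous received SNR $g_{ij}=\rho|h_{ij}|^2$, where the fades $h_{ij}\sim\mathcal{CN}(0,1)$ are i.i.d. (Rayleigh fading) and constant over one time cycle of duration $T$, and $\rho=P_t/(W\sigma_0)$ is the common average SNR, with $P_t$ the transmit power, $W$ the bandwidth and $\sigma_0$ the noise power spectral density. With the APs transmitting cooperatively, the achievable rate of device $j$ is $\mathcal{R}_j=W\log_2\!\big(1+\sum_{i\in\mathscr{A}}g_{ij}\big)$. The controller knows all $g_{ij}$ perfectly and, in each cycle, schedules exactly $K\in\{1,\dots,N\}$ devices (a set $\mathcal{S}$ with $|\mathcal{S}|=K$, which may depend on the channel realization), each receiving a packet of $B'=\frac{N}{K}B$ bits in TDMA fashion at rate $\mathcal{R}_j$; the transmission is in outage if $\sum_{j\in\mathcal{S}} B'/\mathcal{R}_j > T$. With $B,T,W,\sigma_0,N,M,K$ fixed (zero multiplexing gain), define the diversity order $d=-\lim_{P_t\to\infty}\frac{\log \mathbb{P}_{\mathrm{out}}}{\log P_t}$. Then the maximum diversity order achievable by such a scheduler (attained by scheduling the $K$ devices with the largest $\mathcal{R}_j$) is $N-K+1$ when $M=1$, and $M(N-K+1)$ for general $M$.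
   Context: $\mathbb{P}_{\mathrm{out}}$ denotes the probability (over the fading) that the scheduled transmission in a cycle is in outage. Logarithms of rates are base 2. *)

From HB Require Import structures.
From mathcomp Require Import all_boot all_order all_algebra.
From mathcomp Require Import all_classical all_reals all_analysis.
From mathcomp Require Import normal_distribution.
Set Implicit Arguments. Unset Strict Implicit. Unset Printing Implicit Defensive.
Import Order.TTheory GRing.Theory Num.Theory.
Import numFieldNormedType.Exports.
Local Open Scope classical_set_scope.
Local Open Scope ring_scope.

Definition log2 {R : realType} (x : R) : R := ln x / ln 2.

Definition rate {R : realType} {M N : nat} (W : R) (g : 'I_M -> 'I_N -> R)
  (j : 'I_N) : R := W * log2 (1 + \sum_(i < M) g i j).

Definition outage {R : realType} {M N : nat} (B T W : R) (K : nat)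
  (g : 'I_M -> 'I_N -> R) (S : {set 'I_N}) : Prop :=
  T < \sum_(j in S) ((N%:R / K%:R * B) / rate W g j).

(* Instantaneous SNRs g_ij = rho |h_ij|^2 with rho = Pt/(W sigma0), where
   h_ij = hr i j + i * hi i j. *)
Definition gains {R : realType} {T : Type} {M N : nat} (W sigma0 Pt : R)
  (hr hi : 'I_M -> 'I_N -> T -> R) (w : T) : 'I_M -> 'I_N -> R :=
  fun i j => Pt / (W * sigma0) * (hr i j w ^+ 2 + hi i j w ^+ 2).

Definition scheduler (R : realType) (M N : nat) :=
  R -> ('I_M -> 'I_N -> R) -> {set 'I_N}.

Definition schedules_K {R : realType} {M N : nat} (K : nat)
  (sched : scheduler R M N) : Prop :=
  forall Pt g, #|sched Pt g| = K.

Definition topK_scheduler {R : realType} {M N : nat} (W : R) (K : nat)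
  (sched : scheduler R M N) : Prop :=
  schedules_K K sched /\
  forall Pt g (j k : 'I_N), j \in sched Pt g -> k \notin sched Pt g ->
    rate W g k <= rate W g j.

Definition measurable_scheduler {R : realType} {d} {Ω : measurableType d}
  {M N : nat} (W sigma0 : R) (hr hi : 'I_M -> 'I_N -> Ω -> R)
  (sched : scheduler R M N) : Prop :=
  forall Pt (S : {set 'I_N}),
    measurable [set w | sched Pt (gains W sigma0 Pt hr hi w) = S].

Definition Pout {R : realType} {d} {Ω : measurableType d} (P : probability Ω R)
  {M N : nat} (B T W sigma0 : R) (K : nat) (hr hi : 'I_M -> 'I_N -> Ω -> R)
  (sched : scheduler R M N) (Pt : R) : R :=
  fine (P [set w | outage B T W K (gains W sigma0 Pt hr hi w)
                     (sched Pt (gains W sigma0 Pt hr hi w))]).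

Definition mutually_independent {R : realType} {d} {Ω : measurableType d}
  (P : probability Ω R) {I : finType} (X : I -> Ω -> R) : Prop :=
  forall A : I -> set R, (forall i, measurable (A i)) ->
    P (\bigcap_(i in [set: I]) (X i @^-1` A i)) =
    (\prod_(i : I) P (X i @^-1` A i))%E.

(* Rayleigh fading: h_ij = hr_ij + i hi_ij ~ CN(0,1) i.i.d., i.e. the 2MN real
   and imaginary parts are mutually independent N(0, 1/2) random variables. *)
Definition rayleigh_fading {R : realType} {d} {Ω : measurableType d}
  (P : probability Ω R) {M N : nat} (hr hi : 'I_M -> 'I_N -> Ω -> R) : Prop :=
  let X := fun (k : 'I_M * 'I_N * bool) =>
             if k.2 then hr k.1.1 k.1.2 else hi k.1.1 k.1.2 in
  (forall k, measurable_fun setT (X k)) /\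
  mutually_independent P X /\
  (forall k (A : set R), measurable A ->
     P (X k @^-1` A) = normal_prob 0 (Num.sqrt (2^-1)) A).

(* Let Z_j = sum_i |h_ij|^2 be the channel energy of device j: a sum of 2M
   squares of independent N(0, 1/2) coordinates, and the SNR of device j is
   rho Z_j with rho = Pt / (W sigma0).  A schedule of K devices can only be in
   outage if some scheduled device has rate below K B' / T.  For the top-K
   scheduler this forces the N - K + 1 weakest devices to have Z_j = O(1/rho);
   confining their 2M (N - K + 1) coordinates to intervals of length
   O(rho^-1/2) has probability O(rho^-(M (N - K + 1))), and a union bound over
   the choice of these devices bounds P_out.  Conversely, for any scheduler, if
   N - K + 1 fixed devices have Z_j < c / rho then one of them is scheduled and
   its packet alone overflows the cycle; confining their coordinates to
   (0, O(rho^-1/2)] has probability of order rho^-(M (N - K + 1)).  Taking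
   logarithms gives the diversity order M (N - K + 1). *)

From HB Require Import structures.
From mathcomp Require Import all_boot all_order all_algebra.
From mathcomp Require Import all_classical all_reals all_analysis.
From mathcomp Require Import normal_distribution measurable_realfun.
From mathcomp Require Import ring lra.
Set Implicit Arguments. Unset Strict Implicit. Unset Printing Implicit Defensive.
Import Order.TTheory GRing.Theory Num.Theory.
Import numFieldNormedType.Exports.
Local Open Scope classical_set_scope.
Local Open Scope ring_scope.

Section log_ratio.
Variable R : realType.

Lemma ln_cvgy : @ln R x @[x --> +oo] --> +oo.
Proof.
apply/cvgryPgt => A; apply: filterS (nbhs_pinfty_gt (r := expR A) _) => // x Ax.
by rewrite -ltr_expR lnK// posrE (lt_trans _ Ax) ?expR_gt0.
Qed.

Lemma div_ln_cvg0 (c : R) : c / ln x @[x --> +oo] --> 0.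
Proof.
rewrite -(mulr0 c); apply: cvgM; first exact: cvg_cst.
apply/gtr0_cvgV0; last exact: ln_cvgy.
by apply: filterS (nbhs_pinfty_gt (r := 1) _) => // x; exact: ln_gt0.
Qed.

Lemma gt0_of_ge_mulXn (D : nat) (a x y : R) : 0 < a -> 0 < x ->
  a <= y * x ^+ D -> 0 < y.
Proof. by move=> a0 x0 ay; rewrite -(pmulr_lgt0 _ (exprn_gt0 D x0)) (lt_le_trans a0). Qed.

Lemma neg_ln_div_lnE (D : nat) (x y : R) : 1 < x -> 0 < y ->
  - ln y / ln x = D%:R - ln (y * x ^+ D) / ln x.
Proof.
move=> x1 y0; have x0 : 0 < x := lt_trans ltr01 x1.
rewrite lnM ?posrE ?exprn_gt0 // lnXn //.
by field; rewrite gt_eqF ?ln_gt0.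
Qed.

Lemma neg_ln_div_ln_cvg (f : R -> R) (D : nat) (a b : R) : 0 < a ->
  (\forall x \near +oo, a <= f x * x ^+ D <= b) ->
  - ln (f x) / ln x @[x --> +oo] --> (D%:R : R).
Proof.
move=> a0 fD; have {}fD : \forall x \near +oo, 1 < x /\ a <= f x * x ^+ D <= b.
  by apply: filterS2 (nbhs_pinfty_gt (r := 1) _) fD.
apply: cvg_trans (_ : D%:R - ln (f x * x ^+ D) / ln x @[x --> +oo] --> _).
  apply: near_eq_cvg; apply: filterS fD => x [x1 /andP[afx _]].
  by rewrite -neg_ln_div_lnE // (gt0_of_ge_mulXn a0 (lt_trans ltr01 x1) afx).
rewrite -[X in _ --> X]subr0; apply: cvgB; first exact: cvg_cst.
apply: (squeeze_cvgr _ (div_ln_cvg0 (ln a)) (div_ln_cvg0 (ln b))).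
apply: filterS fD => x [x1 /andP[afx fxb]].
apply/andP; split; rewrite ler_pM2r ?invr_gt0 ?ln_gt0 // ler_ln ?posrE //.
- exact: lt_le_trans afx.
- exact: lt_le_trans a0 afx.
- exact: lt_le_trans (lt_le_trans a0 afx) fxb.
Qed.

Lemma neg_ln_div_ln_cvge_le (f : R -> R) (D : nat) (a : R) (l : \bar R) :
  0 < a -> (\forall x \near +oo, a <= f x * x ^+ D) ->
  ((- ln (f x) / ln x)%:E @[x --> +oo] --> l) -> (l <= D%:R%:E)%E.
Proof.
move=> a0 fD fl.
have bound_cvg : (D%:R - ln a / ln x)%:E @[x --> +oo] --> (D%:R - 0)%:E.
  apply: cvg_EFin; first exact: nearW.
  exact: cvgB (cvg_cst _) (div_ln_cvg0 _).
rewrite -[D%:R]subr0; apply: (lee_cvg_to fl bound_cvg).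
apply: filterS2 (nbhs_pinfty_gt (r := 1) _) fD => // x x1 afx.
have fx0 := gt0_of_ge_mulXn a0 (lt_trans ltr01 x1) afx.
rewrite lee_fin (neg_ln_div_lnE D x1 fx0) lerD2l lerN2.
by rewrite ler_pM2r ?invr_gt0 ?ln_gt0 // ler_ln ?posrE // (lt_le_trans a0).
Qed.

End log_ratio.

Lemma measurable_inv (R : realType) : measurable_fun [set: R] GRing.inv.
Proof.
rewrite -(setUv [set 0]); apply/measurable_funU => //; first exact: measurableC.
split; first exact: measurable_fun_set1.
apply: open_continuous_measurable_fun.
  exact/closed_openC/accessible_closed_set1/hausdorff_accessible/Rhausdorff.
by move=> x /set_mem x0; apply: inv_continuous; apply/eqP.
Qed.

Lemma content_sub_finsum d (T : semiRingOfSetsType d) (R : realFieldType)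
    (mu : {content set T -> \bar R}) (I : finType) (A : set T) (F : I -> set T) :
  measurable A -> (forall i, measurable (F i)) -> A `<=` \bigcup_i F i ->
  (mu A <= \sum_i mu (F i))%E.
Proof.
move=> mA mF AF.
apply: le_trans (content_sub_fsum mu finite_finset (fun i _ => mF i) mA AF) _.
rewrite (fsbigE (enum I)) ?enum_uniq// => [|i _]; last by rewrite mem_enum.
by rewrite big_enum_cond; under eq_bigl do rewrite in_setT.
Qed.

Section normal_prob_bounds.
Variables (R : realType) (s : R).
Hypothesis s0 : s != 0.

Lemma normal_prob_le_peak (V : set R) : measurable V ->
  (normal_prob 0 s V <= (normal_peak s)%:E * lebesgue_measure V)%E.
Proof.
move=> mV; rewrite /normal_prob -integral_cst//.
apply: ge0_le_integral => //.
- by move=> x _; rewrite lee_fin normal_pdf_ge0.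
- apply/measurable_EFinP; apply: measurable_funTS; exact: measurable_normal_pdf.
- by move=> x _; rewrite lee_fin /= normal_pdf_ub.
Qed.

Lemma normal_prob_itv_le (a : R) : 0 <= a ->
  (normal_prob 0 s `[(- a)%R, a] <= (normal_peak s * (a *+ 2))%:E)%E.
Proof.
move=> a0; apply: le_trans (normal_prob_le_peak _) _ => //.
rewrite lebesgue_measure_itv /=; case: ifP => _.
  by rewrite -EFinD -EFinM lee_fin opprK -mulr2n.
by rewrite mule0 lee_fin mulr_ge0 ?normal_peak_ge0 ?mulrn_wge0.
Qed.

Definition normal_floor : R := normal_peak s * expR (- (s ^+ 2 *+ 2)^-1).

Lemma normal_floor_gt0 : 0 < normal_floor.
Proof. by rewrite mulr_gt0 ?expR_gt0 ?normal_peak_gt0. Qed.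

Lemma normal_prob_ge_floor (V : set R) : measurable V -> V `<=` `[-1, 1] ->
  (normal_floor%:E * lebesgue_measure V <= normal_prob 0 s V)%E.
Proof.
move=> mV V1; rewrite /normal_prob -integral_cst//.
apply: ge0_le_integral => //.
- by move=> x _; rewrite lee_fin ltW ?normal_floor_gt0.
- apply/measurable_EFinP; apply: measurable_funTS; exact: measurable_normal_pdf.
move=> x Vx; rewrite lee_fin /= normal_pdfE // /normal_floor.
rewrite ler_wpM2l ?normal_peak_ge0 //.
rewrite /normal_fun ler_expR subr0 !mulNr lerN2.
have := V1 _ Vx; rewrite /= in_itv /= => /andP[xN1 x1].
have x2 : x ^+ 2 <= 1 by rewrite expr2; nra.
by rewrite -[leRHS]mul1r ler_wpM2r// invr_ge0 mulrn_wge0// sqr_ge0.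
Qed.

Lemma normal_prob_oc_ge (a : R) : 0 < a <= 1 ->
  ((normal_floor * a)%:E <= normal_prob 0 s `]0%R, a])%E.
Proof.
move=> /andP[a0 a1]; apply: le_trans (normal_prob_ge_floor _ _) => //.
  by rewrite lebesgue_measure_itv /= lte_fin a0 -EFinD -EFinM subr0.
move=> x /=; rewrite !in_itv /= => /andP[x0 xa]; apply/andP; split.
  by apply: le_trans (ltW x0); rewrite lerN10.
exact: le_trans xa a1.
Qed.

End normal_prob_bounds.

Lemma card_devices_coords (M N : nat) (U : {set 'I_N}) :
  #|[pred k : 'I_M * 'I_N * bool | k.1.2 \in U]| = (M * #|U| * 2)%N.
Proof.
rewrite -[M in RHS]card_ord -card_bool -!cardX.
by apply: eq_card => -[[i j] b]; rewrite !inE /= andbT.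
Qed.

(* the real and imaginary parts of a CN(0, 1) variable have variance 1/2 *)
Definition coord_sd {R : realType} : R := Num.sqrt (2^-1).

Lemma coord_sd_neq0 {R : realType} : @coord_sd R != 0.
Proof. by rewrite gt_eqF // sqrtr_gt0 invr_gt0. Qed.

Section fading_coordinates.
Variables (R : realType) (d : measure_display) (Ω : measurableType d)
  (P : probability Ω R) (M N : nat) (hr hi : 'I_M -> 'I_N -> Ω -> R).
Hypothesis fading : rayleigh_fading P hr hi.

Definition fading_coord (k : 'I_M * 'I_N * bool) : Ω -> R :=
  if k.2 then hr k.1.1 k.1.2 else hi k.1.1 k.1.2.

Lemma measurable_fading_coord k : measurable_fun setT (fading_coord k).
Proof. by case: fading => + _; apply. Qed.

Definition coords_in (U : {set 'I_N}) (A : set R) : set Ω :=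
  \bigcap_(k in [set: _]) (fading_coord k @^-1` if k.1.2 \in U then A else setT).

Lemma measurable_coords_in U A : measurable A -> measurable (coords_in U A).
Proof.
move=> mA; apply: fin_bigcap_measurable; first exact: finite_finset.
move=> k _; rewrite -[_ @^-1` _]setTI; apply: measurable_fading_coord => //.
by case: ifP.
Qed.

Lemma prob_coords_in U A : measurable A ->
  P (coords_in U A) = (fine (normal_prob 0 coord_sd A) ^+ (M * #|U| * 2))%:E.
Proof.
move=> mA; case: fading => _ [indep law].
rewrite /coords_in indep => [|k]; last by case: ifP.
rewrite -card_devices_coords -prodr_const -prodEFin [RHS]big_mkcond /=.
apply: eq_bigr => k _; rewrite inE law; last by case: ifP.
case: ifP => _; last by rewrite probability_setT.
by rewrite fineK // fin_num_measure.
Qed.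

End fading_coordinates.

Section outage_measurable.
Variables (R : realType) (d : measure_display) (Ω : measurableType d)
  (M N K : nat) (B T W sigma0 : R) (hr hi : 'I_M -> 'I_N -> Ω -> R).
Hypotheses (mhr : forall i j, measurable_fun setT (hr i j))
  (mhi : forall i j, measurable_fun setT (hi i j)).

Lemma measurable_rate Pt j :
  measurable_fun setT (fun w => rate W (gains W sigma0 Pt hr hi w) j).
Proof.
apply: measurable_funM => //; apply: measurable_funM => //.
apply: measurableT_comp; first exact: measurable_ln.
apply: measurable_funD => //; apply: measurable_sum => i.
by apply: measurable_funM => //; apply: measurable_funD; exact: measurable_funX.
Qed.

Lemma measurable_outage Pt (S : {set 'I_N}) :
  measurable [set w | outage B T W K (gains W sigma0 Pt hr hi w) S].
Proof.
pose tx w := \sum_(j in S) (N%:R / K%:R * B / rate W (gains W sigma0 Pt hr hi w) j).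
have mtx : measurable_fun setT tx.
  rewrite /tx; under eq_fun do rewrite big_mkcond /=.
  apply: measurable_sum => j; case: (j \in S); last exact: measurable_cst.
  exact/measurable_funM/(measurableT_comp (@measurable_inv R) (measurable_rate Pt j)).
rewrite -[X in measurable X]setTI.
have -> : [set w | outage B T W K (gains W sigma0 Pt hr hi w) S] = tx @^-1` `]T, +oo[.
  by apply/seteqP; split => w; rewrite /= in_itv /= andbT.
exact: mtx.
Qed.

Lemma measurable_scheduled_outage (sched : scheduler R M N) Pt :
  measurable_scheduler W sigma0 hr hi sched ->
  measurable [set w | outage B T W K (gains W sigma0 Pt hr hi w)
                        (sched Pt (gains W sigma0 Pt hr hi w))].
Proof.
move=> msched.
have -> : [set w | outage B T W K (gains W sigma0 Pt hr hi w)
                     (sched Pt (gains W sigma0 Pt hr hi w))] =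
    \bigcup_(S in [set: {set 'I_N}])
      ([set w | sched Pt (gains W sigma0 Pt hr hi w) = S] `&`
       [set w | outage B T W K (gains W sigma0 Pt hr hi w) S]).
  apply/seteqP; split => [w /= out|w [S _ [/= <- //]]].
  by exists (sched Pt (gains W sigma0 Pt hr hi w)).
apply: fin_bigcup_measurable; first exact: finite_finset.
by move=> S _; apply: measurableI; [exact: msched | exact: measurable_outage].
Qed.

End outage_measurable.

Lemma meet_of_card_gt (T : finType) (A B : {set T}) :
  (#|T| < #|A| + #|B|)%N -> exists2 x, x \in A & x \in B.
Proof.
move=> ABT; have /set0Pn[x] : A :&: B != finset.set0.
  apply: contraTneq ABT => AB0; rewrite -leqNgt -cardsUI AB0 cards0 addn0.
  exact: max_card.
by rewrite inE => /andP[xA xB]; exists x.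
Qed.

Section rates.
Variables (R : realType) (M N : nat) (W : R) (g : 'I_M -> 'I_N -> R).
Hypotheses (W0 : 0 < W) (g_ge0 : forall i j, 0 <= g i j).

(* [2 ^ (r / W) - 1]: the SNR at which [W log2 (1 + SNR)] equals [r] *)
Definition snr_threshold (r : R) : R := expR (r * ln 2 / W) - 1.

Lemma snr_threshold_gt0 r : 0 < r -> 0 < snr_threshold r.
Proof.
move=> r0; rewrite subr_gt0 expR_gt1.
by rewrite !mulr_gt0 ?invr_gt0 ?ln_gt0 ?ltr1n.
Qed.

Lemma snr_ge0 j : 0 <= \sum_i g i j.
Proof. by apply: sumr_ge0 => i _; exact: g_ge0. Qed.

Lemma rate_ltE j r : (rate W g j < r) = (\sum_i g i j < snr_threshold r).
Proof.
have ln2_gt0 : 0 < ln (2 : R) by rewrite ln_gt0 ?ltr1n.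
have snr1_gt0 : 0 < 1 + \sum_i g i j by rewrite (lt_le_trans ltr01) ?lerDl ?snr_ge0.
rewrite /rate /log2 -ltr_pdivlMl // ltr_pdivrMr // -ltr_expR lnK ?posrE //.
by rewrite /snr_threshold ltrBrDl addrC [_ * ln 2 / W]mulrC mulrA.
Qed.

Lemma rate_ge0 j : 0 <= rate W g j.
Proof.
rewrite /rate /log2; apply: mulr_ge0; first exact: ltW.
by rewrite divr_ge0 ?ln_ge0 ?lerDl ?snr_ge0 // ltW // ln_gt0 ?ltr1n.
Qed.

Lemma rate_gt0 j : 0 < \sum_i g i j -> 0 < rate W g j.
Proof.
move=> snr0; rewrite /rate /log2; apply: mulr_gt0 => //.
by rewrite divr_gt0 ?ln_gt0 ?ltrDl ?ltr1n.
Qed.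

End rates.

Section scheduling.
Variables (R : realType) (M N K : nat) (B T W : R).
Hypotheses (K_gt0 : (0 < K)%N) (KN : (K <= N)%N) (B0 : 0 < B) (T0 : 0 < T).

Definition packet_size : R := N%:R / K%:R * B.

Lemma packet_size_gt0 : 0 < packet_size.
Proof. by rewrite mulr_gt0 // divr_gt0 // ltr0n (leq_trans K_gt0). Qed.

(* U consists of the slowest scheduled device and the N - K unscheduled ones. *)
Lemma topK_outage_slow_devices (sched : scheduler R M N) Pt g :
  topK_scheduler W K sched -> outage B T W K g (sched Pt g) ->
  exists2 U : {set 'I_N}, #|U| = (N - K + 1)%N &
    forall j, j \in U -> rate W g j < K%:R * packet_size / T.
Proof.
move=> [cardS top]; set S := sched Pt g => out.
have K0 : 0 < K%:R :> R by rewrite ltr0n.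
have [j jS slow_j] : exists2 j, j \in S & T / K%:R < packet_size / rate W g j.
  apply/exists_inP; apply: contraLR out => /exists_inPn fast; rewrite -leNgt.
  apply: (@le_trans _ _ (\sum_(j in S) T / K%:R)).
    by apply: ler_sum => j /fast; rewrite leNgt.
  by rewrite sumr_const cardS -[_ *+ K]mulr_natr divfK ?gt_eqF.
have rate_j_gt0 : 0 < rate W g j.
  have : 0 < packet_size / rate W g j by rewrite (lt_trans _ slow_j) ?divr_gt0.
  by rewrite pmulr_rgt0 ?packet_size_gt0 // invr_gt0.
have rate_j_lt : rate W g j < K%:R * packet_size / T.
  rewrite ltr_pdivlMr // in slow_j; rewrite ltr_pdivlMr //.
  suff -> : rate W g j * T = K%:R * (T / K%:R * rate W g j) by rewrite ltr_pM2l.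
  by field; rewrite gt_eqF.
exists (j |: ~: S).
  by rewrite cardsU1 !inE jS /= cardsCs finset.setCK card_ord cardS addnC.
move=> k; rewrite !inE => /orP[/eqP -> // | kS].
exact: le_lt_trans (top _ _ _ _ jS kS) rate_j_lt.
Qed.

Lemma slow_devices_outage (sched : scheduler R M N) Pt g (U : {set 'I_N}) :
  schedules_K K sched -> #|U| = (N - K + 1)%N ->
  (forall j, 0 <= rate W g j) ->
  (forall j, j \in U -> 0 < rate W g j < packet_size / T) ->
  outage B T W K g (sched Pt g).
Proof.
move=> cardS cardU rate_ge0 slow.
have [j jS jU] : exists2 j, j \in sched Pt g & j \in U.
  by apply: meet_of_card_gt; rewrite cardS cardU card_ord addnA subnKC // addn1.
have /andP[rate_j_gt0 rate_j_lt] := slow j jU.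
rewrite /outage (bigD1 j) //= -[T]addr0; apply: ltr_leD.
  by rewrite ltr_pdivlMr // mulrC -ltr_pdivlMr.
by apply: sumr_ge0 => k _; rewrite divr_ge0 ?rate_ge0 ?ltW ?packet_size_gt0.
Qed.

End scheduling.

Lemma exists_card_eq (n k : nat) : (k <= n)%N -> exists U : {set 'I_n}, #|U| = k.
Proof.
move=> kn; exists [set widen_ord kn i | i : 'I_k].
have widen_inj : injective (widen_ord kn) by move=> a b [] /val_inj.
by rewrite card_imset // card_ord.
Qed.

Section coords_in_bounds.
Variables (R : realType) (d : measure_display) (Ω : measurableType d)
  (P : probability Ω R) (M N : nat) (hr hi : 'I_M -> 'I_N -> Ω -> R).
Hypothesis fading : rayleigh_fading P hr hi.

Lemma prob_coords_in_oc_ge (U : {set 'I_N}) (s : R) : 0 < s <= 1 ->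
  (((normal_floor coord_sd * s) ^+ (M * #|U| * 2))%:E <=
    P (coords_in hr hi U `]0%R, s]))%E.
Proof.
move=> s01; rewrite prob_coords_in // lee_fin lerXn2r ?nnegrE ?fine_ge0 //.
- by case/andP: s01 => s0 _; rewrite mulr_ge0 ?ltW ?normal_floor_gt0 ?coord_sd_neq0.
- rewrite -lee_fin fineK ?fin_num_measure //.
  by have := normal_prob_oc_ge (@coord_sd_neq0 R) s01.
Qed.

Lemma prob_coords_in_itv_le (U : {set 'I_N}) (a : R) : 0 <= a ->
  (P (coords_in hr hi U `[(- a)%R, a]) <=
    ((normal_peak coord_sd * (a *+ 2)) ^+ (M * #|U| * 2))%:E)%E.
Proof.
move=> a0; rewrite prob_coords_in // lee_fin lerXn2r ?nnegrE ?fine_ge0 //.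
- by rewrite mulr_ge0 ?normal_peak_ge0 ?mulrn_wge0.
- rewrite -lee_fin fineK ?fin_num_measure //.
  by have := normal_prob_itv_le (@coord_sd_neq0 R) a0.
Qed.

End coords_in_bounds.

Section fades_and_outage.
Variables (R : realType) (d : measure_display) (Ω : measurableType d)
  (M N K : nat) (B T W sigma0 : R) (hr hi : 'I_M -> 'I_N -> Ω -> R).
Hypotheses (K_gt0 : (0 < K)%N) (KN : (K <= N)%N) (B0 : 0 < B) (T0 : 0 < T)
  (W0 : 0 < W) (sigma0_gt0 : 0 < sigma0).

Definition fade_energy (j : 'I_N) (w : Ω) : R :=
  \sum_i (hr i j w ^+ 2 + hi i j w ^+ 2).

Lemma fade_energy_ge i j w : hr i j w ^+ 2 + hi i j w ^+ 2 <= fade_energy j w.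
Proof.
rewrite /fade_energy (bigD1 i) //= lerDl.
by apply: sumr_ge0 => k _; rewrite addr_ge0 ?sqr_ge0.
Qed.

Lemma snr_gainsE Pt w j :
  \sum_i gains W sigma0 Pt hr hi w i j = Pt / (W * sigma0) * fade_energy j w.
Proof. by rewrite /fade_energy big_distrr. Qed.

Lemma gains_ge0 Pt w : 0 <= Pt -> forall i j, 0 <= gains W sigma0 Pt hr hi w i j.
Proof.
move=> Pt0 i j; apply: mulr_ge0; last by rewrite addr_ge0 ?sqr_ge0.
by rewrite divr_ge0 // ltW // mulr_gt0.
Qed.

Lemma coords_inP U A w :
  coords_in hr hi U A w <-> forall i j, j \in U -> A (hr i j w) /\ A (hi i j w).
Proof.
split=> [inA i j jU | inA [[i j] b] _].
  by split; [have := inA (i, j, true) I | have := inA (i, j, false) I]; rewrite /= jU.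
by rewrite /fading_coord /=; case: ifP => // /(inA i j)[]; case: b.
Qed.

Lemma small_fades_outage (sched : scheduler R M N) Pt (U : {set 'I_N}) s w :
  (0 < M)%N -> schedules_K K sched -> 0 < Pt -> #|U| = (N - K + 1)%N ->
  Pt / (W * sigma0) * (s ^+ 2 *+ 2 *+ M) < snr_threshold W (packet_size N K B / T) ->
  coords_in hr hi U `]0%R, s] w ->
  outage B T W K (gains W sigma0 Pt hr hi w) (sched Pt (gains W sigma0 Pt hr hi w)).
Proof.
move=> M_gt0 cardS Pt0 cardU snr_small /coords_inP small.
have g_ge0 := gains_ge0 w (ltW Pt0).
apply: (slow_devices_outage K_gt0 KN B0 T0 _ cardS cardU); first exact: rate_ge0.
move=> j jU; have coord_small i : 0 < hr i j w ^+ 2 + hi i j w ^+ 2 <= s ^+ 2 *+ 2.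
  have [/andP[hr0 hrs] /andP[hi0 his]] := small i j jU.
  rewrite ltr_pwDl ?sqr_ge0 ?exprn_gt0 //= mulr2n !expr2.
  by apply: lerD; apply: ler_pM => //; exact: ltW.
have energy_gt0 : 0 < fade_energy j w.
  have /andP[coord_gt0 _] := coord_small (Ordinal M_gt0).
  exact: lt_le_trans coord_gt0 (fade_energy_ge _ _ _).
have energy_le : fade_energy j w <= s ^+ 2 *+ 2 *+ M.
  rewrite -[in leRHS](card_ord M) -sumr_const; apply: ler_sum => i _.
  by have /andP[] := coord_small i.
have rho_gt0 : 0 < Pt / (W * sigma0) by rewrite divr_gt0 ?mulr_gt0.
rewrite (rate_ltE W0 g_ge0) rate_gt0 ?snr_gainsE ?(mulr_gt0 rho_gt0 energy_gt0) //=.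
exact: le_lt_trans (ler_wpM2l (ltW rho_gt0) energy_le) snr_small.
Qed.

Lemma topK_outage_coords_in (sched : scheduler R M N) Pt w :
  topK_scheduler W K sched -> 0 < Pt ->
  outage B T W K (gains W sigma0 Pt hr hi w) (sched Pt (gains W sigma0 Pt hr hi w)) ->
  let t := snr_threshold W (K%:R * packet_size N K B / T) * (W * sigma0) / Pt in
  exists2 U : {set 'I_N}, #|U| = (N - K + 1)%N &
    coords_in hr hi U `[(- Num.sqrt t)%R, Num.sqrt t] w.
Proof.
move=> top Pt0 out t.
have [U cardU slow] := topK_outage_slow_devices K_gt0 KN B0 T0 top out.
exists U => //; apply/coords_inP => i j jU.
have energy_le : fade_energy j w <= t.
  have := slow j jU; rewrite (rate_ltE W0 (gains_ge0 w (ltW Pt0))) snr_gainsE => /ltW.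
  have Wsigma0_gt0 : 0 < W * sigma0 by rewrite mulr_gt0.
  rewrite /t ler_pdivlMr //.
  suff -> : fade_energy j w * Pt = Pt / (W * sigma0) * fade_energy j w * (W * sigma0).
    by rewrite ler_pM2r.
  by rewrite mulrAC divfK ?gt_eqF // mulrC.
have sqr_le x : x ^+ 2 <= t -> `[(- Num.sqrt t)%R, Num.sqrt t]%classic x.
  by move=> xt; rewrite /= in_itv /= -ler_norml -sqrtr_sqr ler_wsqrtr.
split; apply/sqr_le/(le_trans _ energy_le)/(le_trans _ (fade_energy_ge i j w)).
  by rewrite lerDl sqr_ge0.
by rewrite lerDr sqr_ge0.
Qed.

End fades_and_outage.

Section diversity.
Variables (R : realType) (d : measure_display) (Ω : measurableType d)
  (P : probability Ω R) (M N K : nat) (B T W sigma0 : R)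
  (hr hi : 'I_M -> 'I_N -> Ω -> R).
Hypotheses (M_gt0 : (0 < M)%N) (K_gt0 : (0 < K)%N) (KN : (K <= N)%N)
  (B0 : 0 < B) (T0 : 0 < T) (W0 : 0 < W) (sigma0_gt0 : 0 < sigma0)
  (fading : rayleigh_fading P hr hi).

Let outage_event (sched : scheduler R M N) Pt :=
  [set w | outage B T W K (gains W sigma0 Pt hr hi w)
                   (sched Pt (gains W sigma0 Pt hr hi w))].

Let measurable_outage_event sched Pt :
  measurable_scheduler W sigma0 hr hi sched -> measurable (outage_event sched Pt).
Proof.
move=> msched; have [mX _] := fading.
apply: measurable_scheduled_outage msched => i j.
- exact: (mX (i, j, true)).
- exact: (mX (i, j, false)).
Qed.

Let Pout_ge (sched : scheduler R M N) Pt p :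
  measurable_scheduler W sigma0 hr hi sched ->
  (p%:E <= P (outage_event sched Pt))%E -> p <= Pout P B T W sigma0 K hr hi sched Pt.
Proof.
move=> msched; rewrite /Pout -lee_fin fineK ?fin_num_measure //.
exact: measurable_outage_event.
Qed.

Let Pout_le (sched : scheduler R M N) Pt p :
  measurable_scheduler W sigma0 hr hi sched ->
  (P (outage_event sched Pt) <= p%:E)%E -> Pout P B T W sigma0 K hr hi sched Pt <= p.
Proof.
move=> msched; rewrite /Pout -lee_fin fineK ?fin_num_measure //.
exact: measurable_outage_event.
Qed.

Lemma Pout_lower_bound (sched : scheduler R M N) :
  schedules_K K sched -> measurable_scheduler W sigma0 hr hi sched ->
  exists2 a : R, 0 < a & \forall x \near +oo,
    a <= Pout P B T W sigma0 K hr hi sched x * x ^+ (M * (N - K + 1)).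
Proof.
move=> cardS msched; set D := (N - K + 1)%N.
have [U cardU] : exists U : {set 'I_N}, #|U| = D.
  by apply: exists_card_eq; rewrite /D addn1 ltn_subrL K_gt0 (leq_trans K_gt0 KN).
pose c := snr_threshold W (packet_size N K B / T).
have c_gt0 : 0 < c by rewrite snr_threshold_gt0 // divr_gt0 ?packet_size_gt0.
pose u := c * (W * sigma0) / (4 * M%:R).
have u_gt0 : 0 < u by rewrite !mulr_gt0 ?invr_gt0 ?mulr_gt0 ?ltr0n.
pose floor := normal_floor (@coord_sd R).
exists ((floor ^+ 2 * u) ^+ (M * D)).
  by rewrite exprn_gt0 // mulr_gt0 ?exprn_gt0 // normal_floor_gt0 // coord_sd_neq0.
near=> x; have ux : u < x by near: x; apply: nbhs_pinfty_gt; exact: num_real.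
have x_gt0 : 0 < x := lt_trans u_gt0 ux.
pose s := Num.sqrt (u / x).
have s2 : s ^+ 2 = u / x by rewrite sqr_sqrtr // divr_ge0 ?ltW.
have s01 : 0 < s <= 1.
  by rewrite sqrtr_gt0 divr_gt0 //= -sqrtr1 ler_wsqrtr // ler_pdivrMr // mul1r ltW.
have -> : (floor ^+ 2 * u) ^+ (M * D) = (floor * s) ^+ (M * #|U| * 2) * x ^+ (M * D).
  rewrite cardU [(M * D * 2)%N]mulnC [in RHS]exprM -exprMn; congr (_ ^+ _).
  by rewrite [in RHS]exprMn s2 -mulrA divfK ?gt_eqF.
apply: ler_wpM2r; first by rewrite exprn_ge0 // ltW.
apply: Pout_ge => //.
apply: le_trans (prob_coords_in_oc_ge fading U s01) _.
apply: le_measure; rewrite ?inE.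
- by apply: (measurable_coords_in fading).
- exact: measurable_outage_event.
move=> w; apply: small_fades_outage => //.
have -> : x / (W * sigma0) * (s ^+ 2 *+ 2 *+ M) = c / 2.
  rewrite s2 /u -[_ *+ M]mulr_natr -[_ *+ 2]mulr_natr; field.
  by rewrite !gt_eqF ?ltr0n ?mulr_gt0.
by rewrite -/c ltr_pdivrMr // ltr_pMr // ltr1n.
Unshelve. all: by end_near. Qed.

Lemma Pout_upper_bound (sched : scheduler R M N) :
  topK_scheduler W K sched -> measurable_scheduler W sigma0 hr hi sched ->
  exists b : R, \forall x \near +oo,
    Pout P B T W sigma0 K hr hi sched x * x ^+ (M * (N - K + 1)) <= b.
Proof.
move=> top msched; set D := (N - K + 1)%N.
pose c := snr_threshold W (K%:R * packet_size N K B / T) * (W * sigma0).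
pose peak := normal_peak (@coord_sd R).
exists ((peak ^+ 2 * 4 * c) ^+ (M * D) *+ #|{set 'I_N}|).
near=> x; have x_gt0 : 0 < x by near: x; apply: nbhs_pinfty_gt; exact: num_real.
have c_gt0 : 0 < c.
  rewrite /c mulr_gt0 ?mulr_gt0 // snr_threshold_gt0 //.
  by rewrite divr_gt0 // mulr_gt0 ?ltr0n // packet_size_gt0.
pose t := c / x.
have t_ge0 : 0 <= t by rewrite divr_ge0 ?ltW.
pose F (U : {set 'I_N}) := if #|U| == D then coords_in hr hi U `[(- Num.sqrt t)%R, Num.sqrt t]
                           else set0.
have mF U : measurable (F U).
  by rewrite /F; case: ifP => // _; apply: (measurable_coords_in fading).
have PF U : (P (F U) <= ((peak * (Num.sqrt t *+ 2)) ^+ (M * D * 2))%:E)%E.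
  rewrite /F; case: eqP => [<-|_]; first exact: prob_coords_in_itv_le.
  by rewrite measure0 lee_fin exprn_ge0 // mulr_ge0 ?normal_peak_ge0 ?mulrn_wge0.
rewrite -ler_pdivlMr ?exprn_gt0 //; apply: Pout_le => //.
have outage_sub : outage_event sched x `<=` \bigcup_U F U.
  move=> w /(topK_outage_coords_in K_gt0 KN B0 T0 W0 sigma0_gt0 top x_gt0) [U cardU inU].
  by exists U => //; rewrite /F cardU eqxx.
apply: le_trans (content_sub_finsum P (measurable_outage_event x msched) mF outage_sub) _.
apply: le_trans; first by apply: lee_sum => U _; exact: PF.
rewrite sumEFin sumr_const lee_fin [(M * D * 2)%N]mulnC exprM.
have -> : (peak * (Num.sqrt t *+ 2)) ^+ 2 = peak ^+ 2 * 4 * c / x.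
  by rewrite exprMn -[_ *+ 2]mulr_natr exprMn sqr_sqrtr // /t; field; rewrite gt_eqF.
by rewrite expr_div_n mulrnAl.
Unshelve. all: by end_near. Qed.

End diversity.

Theorem proposition1 (R : realType) (d : measure_display) (Ω : measurableType d)
  (P : probability Ω R) (M N K : nat) (B T W sigma0 : R)
  (hr hi : 'I_M -> 'I_N -> Ω -> R) :
  (1 <= M)%N -> (1 <= K)%N -> (K <= N)%N ->
  0 < B -> 0 < T -> 0 < W -> 0 < sigma0 ->
  rayleigh_fading P hr hi ->
  (* the top-K (largest-rate) scheduler attains diversity order M(N-K+1) *)
  (forall sched : scheduler R M N,
     topK_scheduler W K sched -> measurable_scheduler W sigma0 hr hi sched ->
     - ln (Pout P B T W sigma0 K hr hi sched Pt) / ln Pt @[Pt --> +oo]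
       --> ((M * (N - K + 1))%N%:R : R)) /\
  (* no scheduler achieves a larger diversity order *)
  (forall sched : scheduler R M N,
     schedules_K K sched -> measurable_scheduler W sigma0 hr hi sched ->
     forall dv : \bar R,
       ((- ln (Pout P B T W sigma0 K hr hi sched Pt) / ln Pt)%:E @[Pt --> +oo]
          --> dv) ->
       (dv <= ((M * (N - K + 1))%N%:R)%:E)%E).
Proof.
move=> M_gt0 K_gt0 KN B0 T0 W0 sigma0_gt0 fading; split.
- move=> sched top msched.
  have [a a_gt0 lower] :=
    Pout_lower_bound M_gt0 K_gt0 KN B0 T0 W0 sigma0_gt0 fading top.1 msched.
  have [b upper] := Pout_upper_bound K_gt0 KN B0 T0 W0 sigma0_gt0 fading top msched.
  apply: (neg_ln_div_ln_cvg a_gt0); near=> x; apply/andP; split; near: x.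
  + exact: lower.
  + exact: upper.
- move=> sched cardS msched dv cvg_dv.
  have [a a_gt0 lower] :=
    Pout_lower_bound M_gt0 K_gt0 KN B0 T0 W0 sigma0_gt0 fading cardS msched.
  exact: neg_ln_div_ln_cvge_le a_gt0 lower cvg_dv.
Unshelve. all: by end_near. Qed.
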